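(* Let $k$ be a field of characteristic $p>0$, let $d_1,\ldots,d_n$ be positive integers and $A = k[x_1,\ldots,x_n]/(x_1^{d_1}, \ldots, x_n^{d_n})$. Write $d_i = N_i p + r_i$ with $N_i$ integers and $0 < r_i \le p$. Let $\Lambda\subseteq\{1,\ldots,n\}$ be an index set such that $d_i>r_i$ for all $i \in \Lambda$, and let $m=\sum_{i=1}^nN_i-|\Lambda|+1$. If \[\sum_{i \in \Lambda}r_i \le \frac{\sum_{i=1}^n(d_i-1)-mp}{2}, \] or equivalently \[ \sum_{i \in \Lambda}r_i \le \sum_{i \notin \Lambda} r_i -n+(|\Lambda|-1)p, \] then $A$ fails to have the strong Lefschetz property.
   Context: $A$ is graded by degree, $A=\bigoplus_{i\ge0} A_i$. A linear map has maximal rank if it is injective or surjective. A graded artinian algebra $A$ has the strong Lefschetz property if there is a linear form $\ell\in A_1$ such that for all $i\ge 0$ and all $m\ge 1$ the map $A_i\to A_{i+m}$, $a\mapsto \ell^m a$, has maximal rank. *)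

From HB Require Import structures.
From mathcomp Require Import all_boot all_order all_algebra.
Set Implicit Arguments. Unset Strict Implicit. Unset Printing Implicit Defensive.
Import Order.TTheory GRing.Theory Num.Theory.
Local Open Scope ring_scope.

(* The algebra A = k[x_1..x_n]/(x_1^{d_1},...,x_n^{d_n}) is modelled through
   its monomial basis: the standard monomials x^a with 0 <= a_i < d_i. *)
Definition mono (n : nat) (d : 'I_n -> nat) := {dffun forall i : 'I_n, 'I_(d i)}.

Definition mdeg (n : nat) (d : 'I_n -> nat) (a : mono d) : nat :=
  (\sum_(i < n) (a i : nat))%N.

Definition Alg (k : fieldType) (n : nat) (d : 'I_n -> nat) := {ffun mono d -> k}.

(* multiplication in A: product of polynomials, monomials outside the box
   (i.e. in the ideal (x_i^{d_i})) are discarded *)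
Definition mulA (k : fieldType) (n : nat) (d : 'I_n -> nat) (f g : Alg k d)
  : Alg k d :=
  [ffun c : mono d => \sum_(a : mono d) \sum_(b : mono d)
      (if [forall i, (a i + b i)%N == (c i : nat)] then f a * g b else 0)].

Definition homog (k : fieldType) (n : nat) (d : 'I_n -> nat) (i : nat) (f : Alg k d)
  : Prop := forall a : mono d, f a != 0 -> mdeg a = i.

Definition max_rank (k : fieldType) (n : nat) (d : 'I_n -> nat)
  (phi : Alg k d -> Alg k d) (i j : nat) : Prop :=
  (forall f g, homog i f -> homog i g -> phi f = phi g -> f = g) \/
  (forall h, homog j h -> exists2 f, homog i f & phi f = h).

Definition mul_pow (k : fieldType) (n : nat) (d : 'I_n -> nat) (l : Alg k d) (m : nat)
  (f : Alg k d) : Alg k d := iter m (mulA l) f.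

Definition SLP (k : fieldType) (n : nat) (d : 'I_n -> nat) : Prop :=
  exists2 l : Alg k d, homog 1 l &
    forall i m : nat, (1 <= m)%N -> max_rank (mul_pow l m) i (i + m).

(* Multiplication by a linear form [l = \sum_i c_i x_i] acts on coordinate rows in the
   monomial basis as [\sum_i c_i S_i], where the shifts [S_i] commute.  In characteristic
   [p] this makes [l^p] act as [\sum_i c_i^p S_i^p], which raises a single exponent by [p],
   so it increases the [p]-level [\sum_i (a_i - rho_i) / p] of every monomial above [rho].
   For [rho_i = r_i] on [Lam] and [0] elsewhere this level is at most [\sum_i N_i - |Lam|]
   inside the box, so [l^(m p)] kills every [x^c] with [c >= rho] and is not injective in
   degree [|rho|].  The reflection [c |-> d - 1 - c] of the box transposes [l], so [l^(m p)]
   also misses every [x^(d - 1 - c)] with [c >= rho]; the numerical hypothesis is exactly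
   what allows such a monomial in degree [|rho| + m p], so [l^(m p)] is not surjective. *)

From HB Require Import structures.
From mathcomp Require Import all_boot all_order all_algebra zify.
Import Order.TTheory GRing.Theory Num.Theory.
Set Implicit Arguments. Unset Strict Implicit. Unset Printing Implicit Defensive.
Local Open Scope ring_scope.

Lemma pchar_exprD_comm (R : pzRingType) (p : nat) (x y : R) :
  prime p -> p%:R = 0 :> R -> GRing.comm x y -> (x + y) ^+ p = x ^+ p + y ^+ p.
Proof.
move=> p_pr p0 cxy; have defp := prednK (prime_gt0 p_pr).
rewrite exprDn_comm // big_ord_recr subnn -defp big_ord_recl /= defp.
rewrite subn0 mulr1 mul1r bin0 binn big1 ?addr0 // => i _.
have /dvdnP[q ->] : (p %| 'C(p, bump 0 i))%N.
  by apply: prime_dvd_bin => //; rewrite /bump /= add1n -{2}defp ltnS (valP i).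
by rewrite -mulr_natr natrM p0 !mulr0.
Qed.

Lemma pchar_expr_sum_comm (R : pzRingType) (p m : nat) (F : 'I_m -> R) :
  prime p -> p%:R = 0 :> R -> (forall i j, GRing.comm (F i) (F j)) ->
  (\sum_(i < m) F i) ^+ p = \sum_(i < m) F i ^+ p.
Proof.
move=> p_pr p0; elim: m F => [|m IH] F cF.
  by rewrite !big_ord0 expr0n; case: p p_pr {p0}.
rewrite !big_ord_recr /= pchar_exprD_comm //; last first.
  by apply/commr_sym/commr_sum => i _; apply: cF.
by rewrite IH // => i j; apply: cF.
Qed.

Lemma scale_mx_exp (k : fieldType) (K : nat) (c : k) (A : 'M[k]_K) (m : nat) :
  (c *: A) ^+ m = c ^+ m *: A ^+ m.
Proof.
elim: m => [|m IH]; first by rewrite !expr0 scale1r.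
by rewrite !exprS IH -!mulmxE -scalemxAl -scalemxAr scalerA.
Qed.

Lemma sumr_neq0_exists (k : fieldType) (I : finType) (F : I -> k) :
  \sum_i F i != 0 -> exists i, F i != 0.
Proof.
case: (pickP (fun i => F i != 0)) => [i Fi|F0]; first by exists i.
by rewrite big1 ?eqxx // => i _; apply/eqP/negbFE/F0.
Qed.

Section Monomials.
Context {n : nat} {d : 'I_n -> nat}.
Implicit Types a b c : mono d.

Lemma mono_ext a b : (forall t, (a t : nat) = b t) -> a = b.
Proof. by move=> eq_ab; apply/ffunP => t; apply/val_inj; rewrite /= eq_ab. Qed.

Lemma mdeg_eq1 a : mdeg a = 1%N -> exists i, forall j, (a j : nat) = (j == i).
Proof.
rewrite /mdeg => deg1.
have [i ai] : exists i, (0 < a i)%N.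
  apply/existsP; apply: contraT; rewrite negb_exists => /forallP a0.
  by move: deg1; rewrite big1 // => j _; have := a0 j; rewrite lt0n negbK => /eqP.
exists i; move: deg1; rewrite (bigD1 i) //=.
set rest := (\sum_(j < n | j != i) _)%N => deg1 j.
have rest0 : rest = 0%N by move: deg1 ai; lia.
case: (eqVneq j i) => [->|ji]; first by move: deg1 ai; rewrite rest0; lia.
by move/eqP: rest0; rewrite /rest sum_nat_eq0 => /forallP /(_ j); rewrite ji => /eqP.
Qed.

Definition mono_dec c (j : 'I_n) : mono d :=
  [ffun t => Ordinal (leq_ltn_trans (leq_subr (t == j) (c t)) (ltn_ord (c t)))].

Lemma mono_decE c j t : (mono_dec c j t : nat) = (c t - (t == j))%N.
Proof. by rewrite ffunE. Qed.

Definition dual_mono c : mono d := [ffun t => rev_ord (c t)].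

Lemma dual_monoE c t : (dual_mono c t : nat) = (d t - (c t).+1)%N.
Proof. by rewrite ffunE. Qed.

Lemma dual_monoK : involutive dual_mono.
Proof. by move=> c; apply: mono_ext => t; rewrite !dual_monoE; have := ltn_ord (c t); lia. Qed.

Lemma mdeg_dual_mono c : (mdeg (dual_mono c) + mdeg c)%N = (\sum_(i < n) (d i - 1))%N.
Proof.
rewrite /mdeg -big_split /=; apply: eq_bigr => i _; rewrite dual_monoE.
by have := ltn_ord (c i); lia.
Qed.

Lemma mono_up1 a : (mdeg a < \sum_(i < n) (d i - 1))%N ->
  exists b, (forall t, a t <= b t)%N /\ mdeg b = (mdeg a).+1.
Proof.
move=> lt_top.
have [j aj] : exists j, (a j < d j - 1)%N.
  apply/existsP; apply: contraLR lt_top; rewrite negb_exists => /forallP top.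
  by rewrite -leqNgt /mdeg; apply: leq_sum => i _; have := top i; lia.
have lt_d t : ((a t + (t == j)) < d t)%N.
  by case: (eqVneq t j) => [->|tj]; rewrite ?eqxx ?(negPf tj) /=; have := ltn_ord (a t); lia.
exists [ffun t => Ordinal (lt_d t)]; split=> [t|]; first by rewrite ffunE /=; lia.
rewrite /mdeg (bigD1 j) //= [in RHS](bigD1 j) //= !ffunE /= eqxx addn1 addSn.
by congr _.+1; congr (_ + _)%N; apply: eq_bigr => i /negPf ij; rewrite ffunE /= ij addn0.
Qed.

Lemma mono_up a e : (mdeg a + e <= \sum_(i < n) (d i - 1))%N ->
  exists b, (forall t, a t <= b t)%N /\ mdeg b = (mdeg a + e)%N.
Proof.
elim: e => [|e IH] le_top; first by exists a; rewrite addn0.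
have [b [ab eb]] : exists b, (forall t, a t <= b t)%N /\ mdeg b = (mdeg a + e)%N.
  by apply: IH; move: le_top; rewrite addnS; lia.
have [|c [bc ec]] := mono_up1 (a := b); first by rewrite eb -addnS.
by exists c; split=> [t|]; [apply: leq_trans (bc t) | rewrite ec eb addnS].
Qed.

End Monomials.

Section MultiplicationMatrix.
Context {k : fieldType} {n : nat} {d : 'I_n -> nat}.
Local Notation K := #|mono d|.
Implicit Types (a b c : mono d) (l F : Alg k d).

Definition is_shift (i : 'I_n) b c : bool := [forall j, (c j : nat) == (b j + (j == i))%N].

Definition shift_mx (i : 'I_n) : 'M[k]_K :=
  \matrix_(x, y) (is_shift i (enum_val x) (enum_val y))%:R.

Definition lin_coef l (i : 'I_n) : k := \sum_(a : mono d | (a i : nat) == 1%N) l a.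

Definition mul_mx l : 'M[k]_K := \sum_(i < n) lin_coef l i *: shift_mx i.

Definition alg_row F : 'rV[k]_K := \row_x F (enum_val x).

Lemma alg_row_inj : injective alg_row.
Proof.
move=> F G eqFG; apply/ffunP => a.
by have := congr1 (fun v : 'rV_K => v 0 (enum_rank a)) eqFG; rewrite !mxE enum_rankK.
Qed.

Lemma alg_row_mulA l F : homog 1 l -> alg_row (mulA l F) = alg_row F *m mul_mx l.
Proof.
move=> l1; apply/rowP => y; rewrite !mxE ffunE.
rewrite (reindex (@enum_rank _)) /=; last by apply: onW_bij; apply: enum_rank_bij.
rewrite exchange_big /=; apply: eq_bigr => b _.
rewrite mxE enum_rankK /mul_mx summxE big_distrr /=.
under [RHS]eq_bigr => i _ do rewrite !mxE enum_rankK /lin_coef mulr_suml mulr_sumr big_mkcond.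
rewrite [RHS]exchange_big /=; apply: eq_bigr => a _.
have [-> | la0] := eqVneq (l a) 0.
  by rewrite mul0r if_same big1 // => i _; case: ifP; rewrite ?mul0r ?mulr0.
have [i ai] := mdeg_eq1 (l1 a la0).
rewrite (bigD1 i) //= ai eqxx /= big1 ?addr0; last first.
  by move=> j ji; rewrite ai eq_sym (negPf ji).
have -> : [forall j, (a j + b j)%N == enum_val y j] = is_shift i b (enum_val y).
  by apply: eq_forallb => j; rewrite ai addnC eq_sym.
by case: is_shift; rewrite ?mulr1 ?mulr0 ?mul0r // mulrC.
Qed.

Lemma alg_row_mul_pow l F m : homog 1 l -> alg_row (mul_pow l m F) = alg_row F *m mul_mx l ^+ m.
Proof.
move=> l1; elim: m => [|m IH]; first by rewrite expr0 mulmx1.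
by rewrite /mul_pow iterS alg_row_mulA // -/(mul_pow l m F) IH exprSr -mulmxE mulmxA.
Qed.

Lemma mulmx_shift_mxE i j (x z : 'I_K) :
  (shift_mx i *m shift_mx j) x z =
  [forall t, (enum_val z t : nat) == (enum_val x t + (t == i) + (t == j))%N]%:R.
Proof.
rewrite mxE (reindex (@enum_rank _)) /=; last by apply: onW_bij; apply: enum_rank_bij.
set b := enum_val x; set c := enum_val z.
under eq_bigr => y _ do rewrite !mxE !enum_rankK.
case: forallP => [bc|bc]; last first.
  rewrite big1 // => y _; case E1: (is_shift i b y); case E2: (is_shift j y c);
    rewrite ?mulr0 ?mul0r //.
  move/forallP: E1 => b_y; move/forallP: E2 => yc.
  by case: bc => t; move: (eqP (yc t)) (eqP (b_y t)) => *; apply/eqP; lia.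
have {}bc t : (c t : nat) = (b t + (t == i) + (t == j))%N by apply/eqP.
rewrite (bigD1 (mono_dec c j)) //= big1 ?addr0.
  have -> : is_shift i b (mono_dec c j).
    by apply/forallP => t; rewrite mono_decE bc addnK.
  have -> : is_shift j (mono_dec c j) c; last by rewrite mulr1.
  by apply/forallP => t; rewrite mono_decE bc addnK.
move=> y yc; case E1: (is_shift i b y); case E2: (is_shift j y c); rewrite ?mulr0 ?mul0r //.
move/forallP: E1 => b_y; move/forallP: E2 => yc'.
case/eqP: yc; apply: mono_ext => t; rewrite mono_decE.
by move: (eqP (yc' t)) (eqP (b_y t)) (bc t); lia.
Qed.

Lemma shift_mx_comm i j : GRing.comm (shift_mx i) (shift_mx j).
Proof.
rewrite /GRing.comm -!mulmxE; apply/matrixP => x z; rewrite !mulmx_shift_mxE.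
by congr (nat_of_bool _)%:R; apply: eq_forallb => t; rewrite addnAC.
Qed.

Lemma shift_mx_exp_neq0 i m (x z : 'I_K) : (shift_mx i ^+ m) x z != 0 ->
  forall t, (enum_val z t : nat) = (enum_val x t + (t == i) * m)%N.
Proof.
elim: m z => [|m IH] z.
  rewrite expr0 mxE; case: (eqVneq x z) => [-> _ t|]; last by rewrite eqxx.
  by rewrite muln0 addn0.
rewrite exprSr -mulmxE mxE => /sumr_neq0_exists [y].
have [-> | xy] := eqVneq ((shift_mx i ^+ m) x y) 0; first by rewrite mul0r eqxx.
rewrite mxE; case E: is_shift; last by rewrite mulr0 eqxx.
by move=> _ t; move/forallP: E => /(_ t) /eqP ->; rewrite (IH y xy t); lia.
Qed.

Lemma mul_mx_exp_pchar l (p : nat) : p \in [pchar k] ->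
  mul_mx l ^+ p = \sum_(i < n) lin_coef l i ^+ p *: shift_mx i ^+ p.
Proof.
move=> pchar_p; rewrite /mul_mx pchar_expr_sum_comm.
- by apply: eq_bigr => i _; rewrite scale_mx_exp.
- exact: pcharf_prime pchar_p.
- by rewrite -scaler_nat (pcharf0 pchar_p) scale0r.
move=> i j; rewrite /GRing.comm -!mulmxE -!scalemxAl -!scalemxAr !scalerA mulrC.
by rewrite !mulmxE (shift_mx_comm i j).
Qed.

Definition dual_idx (x : 'I_K) : 'I_K := enum_rank (dual_mono (enum_val x)).

Lemma dual_idxK : involutive dual_idx.
Proof. by move=> x; rewrite /dual_idx enum_rankK dual_monoK enum_valK. Qed.

Lemma mul_mx_dual l x z : mul_mx l x z = mul_mx l (dual_idx z) (dual_idx x).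
Proof.
rewrite /mul_mx !summxE; apply: eq_bigr => i _; rewrite !mxE /dual_idx !enum_rankK.
congr (_ * (nat_of_bool _)%:R); apply/forallP/forallP => sh t; move/eqP: (sh t);
  rewrite !dual_monoE; have := ltn_ord (enum_val x t); have := ltn_ord (enum_val z t);
  move: (enum_val z t) (enum_val x t) => u w;
  by case: (t == i) => /= *; apply/eqP; lia.
Qed.

Lemma mul_mx_exp_dual l m x z :
  (mul_mx l ^+ m) x z = (mul_mx l ^+ m) (dual_idx z) (dual_idx x).
Proof.
elim: m x z => [|m IH] x z.
  rewrite !expr0 !mxE; congr (nat_of_bool _)%:R.
  by apply/eqP/eqP => [->|/(congr1 dual_idx)]; rewrite ?dual_idxK.
rewrite [in LHS]exprSr [in RHS]exprS -!mulmxE !mxE.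
rewrite (reindex dual_idx) /=; last by apply: onW_bij; apply: inv_bij; apply: dual_idxK.
by apply: eq_bigr => y _; rewrite IH mul_mx_dual dual_idxK mulrC.
Qed.

End MultiplicationMatrix.

Section PLevel.
Context {k : fieldType} {n : nat} {d : 'I_n -> nat}.
Variables (p : nat) (rho : 'I_n -> nat).
Local Notation K := #|mono d|.

Definition plevel (c : mono d) : nat := \sum_(j < n) (c j - rho j) %/ p.

Definition supp_plevel_ge (t : nat) (v : 'rV[k]_K) : Prop :=
  forall x, v 0 x != 0 -> (forall j, rho j <= enum_val x j)%N /\ (t <= plevel (enum_val x))%N.

Lemma supp_plevel_ge_shift_mx t v i : (0 < p)%N ->
  supp_plevel_ge t v -> supp_plevel_ge t.+1 (v *m (shift_mx i : 'M[k]_K) ^+ p).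
Proof.
move=> p_gt0 supp_v z; rewrite mxE => /sumr_neq0_exists [x].
rewrite mulf_eq0 negb_or => /andP[vx0 xz0].
have [rho_x lev_x] := supp_v x vx0; have zE := shift_mx_exp_neq0 xz0.
split=> [j|]; first by rewrite zE; move: (rho_x j); lia.
rewrite /plevel (bigD1 i) //= zE eqxx mul1n.
rewrite (eq_bigr (fun j => (enum_val x j - rho j) %/ p)%N); last first.
  by move=> j /negPf ji; rewrite zE ji mul0n addn0.
move: lev_x; rewrite /plevel (bigD1 i) //=.
have -> : (enum_val x i + p - rho i = 1 * p + (enum_val x i - rho i))%N.
  by move: (rho_x i); lia.
by rewrite divnMDl //; lia.
Qed.

Lemma supp_plevel_geD t u v :
  supp_plevel_ge t u -> supp_plevel_ge t v -> supp_plevel_ge t (u + v).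
Proof.
move=> supp_u supp_v x; rewrite mxE.
by have [->|/supp_u //] := eqVneq (u 0 x) 0; rewrite add0r => /supp_v.
Qed.

Lemma supp_plevel_geZ t (c : k) v : supp_plevel_ge t v -> supp_plevel_ge t (c *: v).
Proof. by move=> supp_v x; rewrite mxE mulf_eq0 negb_or => /andP[_ /supp_v]. Qed.

Lemma supp_plevel_ge_sum t m (F : 'I_m -> 'rV[k]_K) :
  (forall i, supp_plevel_ge t (F i)) -> supp_plevel_ge t (\sum_(i < m) F i).
Proof.
move=> supp_F; apply: (big_ind (supp_plevel_ge t)) => // [x|u v]; last exact: supp_plevel_geD.
by rewrite mxE eqxx.
Qed.

Lemma supp_plevel_ge_mul_mx_pchar t (l : Alg k d) v : p \in [pchar k] ->
  supp_plevel_ge t v -> supp_plevel_ge t.+1 (v *m mul_mx l ^+ p).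
Proof.
move=> pchar_p supp_v; rewrite mul_mx_exp_pchar // mulmx_sumr.
apply: supp_plevel_ge_sum => i; rewrite -scalemxAr; apply/supp_plevel_geZ.
by apply: supp_plevel_ge_shift_mx => //; exact: prime_gt0 (pcharf_prime pchar_p).
Qed.

Lemma supp_plevel_ge_mul_mx_exp t s (l : Alg k d) v : p \in [pchar k] ->
  supp_plevel_ge t v -> supp_plevel_ge (t + s) (v *m mul_mx l ^+ (p * s)).
Proof.
move=> pchar_p; elim: s t v => [|s IH] t v supp_v; first by rewrite addn0 muln0 expr0 mulmx1.
rewrite mulnS exprD -mulmxE mulmxA addnS -addSn; apply: IH.
exact: supp_plevel_ge_mul_mx_pchar.
Qed.

End PLevel.

Section MonomialIndicator.
Context {k : fieldType} {n : nat} {d : 'I_n -> nat}.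
Implicit Types (a c : mono d) (l : Alg k d).

Definition mono_ind a : Alg k d := [ffun b => (b == a)%:R].

Lemma homog_mono_ind a : homog (mdeg a) (mono_ind a).
Proof. by move=> b; rewrite ffunE; case: (eqVneq b a) => [-> | _]; rewrite ?eqxx. Qed.

Lemma mono_ind_neq0 a : mono_ind a != 0.
Proof. by apply/eqP => /ffunP /(_ a) /eqP; rewrite !ffunE eqxx oner_eq0. Qed.

Lemma alg_row_mono_ind a : alg_row (mono_ind a) = delta_mx 0 (enum_rank a).
Proof.
by apply/rowP => x; rewrite !mxE ffunE eqxx -(inj_eq enum_val_inj) enum_rankK.
Qed.

Lemma mul_pow_not_inj l m a : homog 1 l ->
  (forall y, (mul_mx l ^+ m) (enum_rank a) y = 0) ->
  ~ (forall f g, homog (mdeg a) f -> homog (mdeg a) g -> mul_pow l m f = mul_pow l m g -> f = g).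
Proof.
move=> l1 row0 inj; have /eqP := mono_ind_neq0 a; apply; apply: inj.
- exact: homog_mono_ind.
- by move=> b; rewrite ffunE eqxx.
apply: alg_row_inj; rewrite !alg_row_mul_pow // alg_row_mono_ind -rowE.
have -> : alg_row (0 : Alg k d) = 0 by apply/rowP => x; rewrite !mxE ffunE.
by rewrite mul0mx; apply/rowP => y; rewrite !mxE row0.
Qed.

Lemma mul_pow_not_surj l m i c : homog 1 l ->
  (forall x, (mul_mx l ^+ m) x (enum_rank c) = 0) ->
  ~ (forall h, homog (mdeg c) h -> exists2 f, homog i f & mul_pow l m f = h).
Proof.
move=> l1 col0 surj; have [f _ /(congr1 alg_row)] := surj _ (homog_mono_ind (a := c)).
move/rowP/(_ (enum_rank c)); rewrite alg_row_mul_pow // alg_row_mono_ind !mxE !eqxx big1.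
  by move/eqP; rewrite eq_sym oner_eq0.
by move=> x _; rewrite col0 mulr0.
Qed.

End MonomialIndicator.

Lemma sum_sub_card n (N : 'I_n -> nat) (Lam : {set 'I_n}) :
  (forall i, i \in Lam -> 0 < N i)%N ->
  (\sum_(i < n) N i = \sum_(i < n) (N i - (i \in Lam)) + #|Lam|)%N.
Proof.
move=> N_gt0; rewrite -sum1_card (big_mkcond (fun i => i \in Lam)) -big_split /=.
apply: eq_bigr => i _; case: (boolP (i \in Lam)) => [/N_gt0|] /=; lia.
Qed.

Section Truncation.
Context {k : fieldType} {n : nat} {d : 'I_n -> nat}.
Variables (p : nat) (N r : 'I_n -> nat) (Lam : {set 'I_n}).
Hypothesis dE : forall i, d i = (N i * p + r i)%N /\ (0 < r i <= p)%N.
Hypothesis r_lt_d : forall i, i \in Lam -> (r i < d i)%N.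

Definition lam_exp (t : 'I_n) : nat := if t \in Lam then r t else 0.

Lemma lam_exp_lt_d t : (lam_exp t < d t)%N.
Proof.
rewrite /lam_exp; case: ifP => [/r_lt_d //|_].
by have [-> /andP[r_gt0 _]] := dE t; rewrite ltn_addl.
Qed.

Definition lam_mono : mono d := [ffun t => Ordinal (lam_exp_lt_d t)].

Lemma lam_monoE t : (lam_mono t : nat) = lam_exp t.
Proof. by rewrite ffunE. Qed.

Lemma mdeg_lam_mono : mdeg lam_mono = (\sum_(i in Lam) r i)%N.
Proof. by rewrite /mdeg (eq_bigr _ (fun t _ => lam_monoE t)) [RHS]big_mkcond. Qed.

(* The integer [m] of the statement; by [sum_sub_card] the subtraction does not truncate. *)
Definition lam_m : nat := (\sum_(i < n) N i - #|Lam| + 1)%N.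

Lemma N_gt0 i : i \in Lam -> (0 < N i)%N.
Proof. by move=> /r_lt_d; have [-> _] := dE i; case: (N i); lia. Qed.

Lemma plevel_le (c : mono d) : (0 < p)%N -> (forall t, lam_exp t <= c t)%N ->
  (plevel p lam_exp c <= \sum_(i < n) (N i - (i \in Lam)))%N.
Proof.
move=> p_gt0 lam_c; apply: leq_sum => j _; rewrite -ltnS ltn_divLR //.
have := ltn_ord (c j); have [dj rj] := dE j; have := lam_c j; rewrite /lam_exp.
move: (c j) => u; case: (boolP (j \in Lam)) => jLam /=.
  by have := N_gt0 jLam; move: dj; nia.
by rewrite subn0 mulSn; move: rj dj; nia.
Qed.

Lemma mul_mx_exp_row0 (l : Alg k d) (c : mono d) y : p \in [pchar k] ->
  (forall t, lam_mono t <= c t)%N -> (mul_mx l ^+ (p * lam_m)) (enum_rank c) y = 0.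
Proof.
move=> pchar_p lam_c; have p_gt0 := prime_gt0 (pcharf_prime pchar_p).
have supp_c : supp_plevel_ge p lam_exp 0 (delta_mx 0 (enum_rank c) : 'rV[k]_#|mono d|).
  move=> x; rewrite mxE; case: (eqVneq x (enum_rank c)) => [->|]; last by rewrite andbF eqxx.
  by rewrite enum_rankK; split=> // t; rewrite -lam_monoE.
apply/eqP; apply: contraT => cy0.
have supp := supp_plevel_ge_mul_mx_exp (s := lam_m) (l := l) pchar_p supp_c.
case: (supp y) => [|lam_y]; first by rewrite -rowE mxE.
rewrite /lam_m (sum_sub_card N_gt0) add0n addnK addn1 => lev_y.
by have := leq_trans lev_y (plevel_le p_gt0 lam_y); rewrite ltnn.
Qed.

Lemma lam_room : (2 * mdeg lam_mono + p * lam_m <= \sum_(i < n) (d i - 1))%N <->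
  2 * (\sum_(i in Lam) r i)%:Z <=
  (\sum_(i < n) (d i - 1)%N)%:Z - ((\sum_(i < n) N i)%:Z - #|Lam|%:Z + 1) * p%:Z.
Proof. by rewrite mdeg_lam_mono /lam_m (sum_sub_card N_gt0); split; lia. Qed.

End Truncation.

Theorem lemma3p4 (k : fieldType) (p : nat) (n : nat) (d : 'I_n -> nat)
  (N r : 'I_n -> nat) (Lam : {set 'I_n}) :
  p \in [pchar k] ->
  (forall i, (0 < d i)%N) ->
  (forall i, d i = (N i * p + r i)%N /\ (0 < r i <= p)%N) ->
  (forall i, i \in Lam -> (r i < d i)%N) ->
  let m : int := (\sum_(i < n) N i)%:Z - #|Lam|%:Z + 1 in
  2 * (\sum_(i in Lam) r i)%:Z <= (\sum_(i < n) (d i - 1)%N)%:Z - m * p%:Z ->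
  ~ SLP k d.
Proof.
(* [0 < d i] already follows from [0 < r i]. *)
move=> pchar_p _ dE r_lt_d m /(lam_room dE r_lt_d) room [l l1 slp].
set rho := lam_mono dE r_lt_d in room; set s := lam_m N Lam in room.
have ker (c : mono d) : (forall t, rho t <= c t)%N ->
    forall y, (mul_mx l ^+ (p * s)) (enum_rank c) y = 0.
  by move=> rho_c y; apply: mul_mx_exp_row0.
have ps_gt0 : (0 < p * s)%N.
  by rewrite muln_gt0 prime_gt0 ?(pcharf_prime pchar_p) /s /lam_m ?addn1.
case: (slp (mdeg rho) (p * s)%N ps_gt0) => [inj|surj].
  exact: mul_pow_not_inj l1 (ker rho (fun t => leqnn _)) inj.
pose e := (\sum_(i < n) (d i - 1) - 2 * mdeg rho - p * s)%N.
have [|c [rho_c deg_c]] := mono_up (a := rho) (e := e); first by rewrite /e; lia.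
have deg_dual : mdeg (dual_mono c) = (mdeg rho + p * s)%N.
  by have := mdeg_dual_mono c; rewrite deg_c /e; lia.
move: surj; rewrite -deg_dual; apply: mul_pow_not_surj l1 _.
by move=> x; rewrite mul_mx_exp_dual /dual_idx enum_rankK dual_monoK ker.
Qed.
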